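(* Let $A$ be a finite alphabet with $|A|=k$, and let $L\subseteq A^*$ be $n$-PT. Let $m=f_k(n)$. Then ${\uparrow}L$ is $m$-PT, while ${\uparrow}_<L$ and $\min(L)$ are $(m+1)$-PT.
   Context: For words $u,v$, $u\sqsubseteq v$ (subword) means $u=a_1\cdots a_\ell$ with letters $a_i$ and $v=v_0a_1v_1\cdots a_\ell v_\ell$ for some words $v_i$; $u\sqsubset v$ means $u\sqsubseteq v$ and $u\ne v$. ${\uparrow}L=\{v\in A^*~|~\exists u\in L: u\sqsubseteq v\}$, ${\uparrow}_<L=\{v~|~\exists u\in L: u\sqsubset v\}$, and $\min(L)=\{u\in L~|~\forall v\in L: v\not\sqsubset u\}$. For $n\in\mathbb{N}$, $u\sim_n v$ iff $u$ and $v$ have exactly the same subwords of length at most $n$; $L$ is $n$-PT if it is a union of $\sim_n$-classes. The functions $f_k$ ($k\geq1$) are defined by $f_1(n)=n$ and $f_{k+1}(n)=\max_{0\leq m\leq n}\bigl(m f_k(n+1-m)+m+f_k(n-m)\bigr)$. *)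

From mathcomp Require Import all_boot.
Set Implicit Arguments. Unset Strict Implicit. Unset Printing Implicit Defensive.

(* Words over A are [seq A]; the subword order u ⊑ v is mathcomp's [subseq u v]
   (scattered subsequence).  Languages are predicates [seq A -> Prop]. *)

Definition lang (A : finType) := seq A -> Prop.

Definition ssubword (A : finType) (u v : seq A) : Prop := subseq u v /\ u <> v.

Definition upw (A : finType) (L : lang A) : lang A :=
  fun v => exists2 u, L u & subseq u v.

Definition supw (A : finType) (L : lang A) : lang A :=
  fun v => exists2 u, L u & ssubword u v.

Definition minl (A : finType) (L : lang A) : lang A :=
  fun u => L u /\ forall v, L v -> ~ ssubword v u.

Definition simn (A : finType) (n : nat) (u v : seq A) : Prop :=
  forall w : seq A, size w <= n -> subseq w u = subseq w v.

Definition nPT (A : finType) (n : nat) (L : lang A) : Prop :=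
  forall u v, simn n u v -> (L u <-> L v).

(* f_1(n) = n, f_{k+1}(n) = max_{0<=m<=n} (m f_k(n+1-m) + m + f_k(n-m)).
   The value at k = 0 is a dummy (only k >= 1 is used). *)
Fixpoint fk (k n : nat) {struct k} : nat :=
  match k with
  | 0 => n
  | k'.+1 =>
      if k' == 0 then n
      else \max_(m < n.+1) (m * fk k' (n.+1 - m) + m + fk k' (n - m))
  end.

From mathcomp Require Import all_boot zify.
From Stdlib Require Import Classical.
Set Implicit Arguments. Unset Strict Implicit. Unset Printing Implicit Defensive.

(* Call a word rigid when deleting any of its letters changes its ~_n class.
   Minimal words of an n-PT language are rigid, and a word is in the upward
   closure (strict upward closure) iff it lies above a minimal word (resp.
   above a one-letter extension of one), so it suffices to bound the length
   of rigid words.  Over an alphabet B, cut a rigid word into arches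
   s_1 a_1 ... s_j a_j, each the shortest factor containing all of B, followed
   by a tail missing some letter.  Everything before s_i is (i-1)-universal
   and a_i s_(i+1) ... is (j-i)-universal (it contains every word of that
   length over B), so a subword of length n of the whole word meets s_i in at
   most n + 1 - j letters: s_i is (n + 1 - j)-rigid over B \ {a_i}, and the
   tail is likewise (n - j)-rigid over a smaller alphabet.  Induction on |B|
   gives the recurrence defining f_k. *)

Section Words.
Variable A : finType.
Implicit Types (u v w x y z s : seq A) (B : {set A}).

Lemma subseq_cat_split w x y : subseq w (x ++ y) ->
  exists w1 w2, [/\ w = w1 ++ w2, subseq w1 x & subseq w2 y].
Proof.
elim: x w => [|c x IH] w /=; first by exists [::], w.
case: w => [|d w] /=; first by exists [::], [::]; rewrite !sub0seq.
case: eqP => [<-|_] /IH [w1 [w2 [-> h1 h2]]].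
  by exists (d :: w1), w2; rewrite /= eqxx.
by exists w1, w2; split => //; apply: subseq_trans h1 (subseq_cons x c).
Qed.

Lemma subseq_insert u v : subseq u v -> size u < size v ->
  exists w, [/\ subseq u w, subseq w v & size w = (size u).+1].
Proof.
elim: v u => [|c v IH] [|d u] //= hs hsz.
  by exists [:: c]; rewrite /= eqxx !sub0seq.
move: hs; case: eqP => [-> hs|_ hs].
  have [w [h1 h2 h3]] := IH u hs hsz.
  by exists (c :: w); rewrite /= eqxx h1 h2 h3.
case: (ltnP (size u).+1 (size v)) => hlt.
  have [w [h1 h2 h3]] := IH _ hs hlt.
  by exists w; split => //; apply: subseq_trans h2 (subseq_cons _ _).
have he : d :: u = v.
  by apply/eqP; rewrite -(geq_leqif (size_subseq_leqif hs)) /=; lia.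
by exists (c :: v); rewrite -he subseq_cons /= !eqxx subseq_refl.
Qed.

Lemma simn0 u v : simn 0 u v.
Proof. by move=> [|c w] // _; rewrite !sub0seq. Qed.

Lemma simn_sym n u v : simn n u v -> simn n v u.
Proof. by move=> h w hw; rewrite h. Qed.

Lemma simn_leq m n u v : m <= n -> simn n u v -> simn m u v.
Proof. by move=> hm h w hw; apply: h; apply: leq_trans hm. Qed.

Definition universal B p x :=
  forall w, size w <= p -> {subset w <= B} -> subseq w x.

Lemma universal0 B x : universal B 0 x.
Proof. by move=> [|c w] // _ _; rewrite sub0seq. Qed.

Lemma universal_subseq B p x y : subseq x y -> universal B p x -> universal B p y.
Proof. by move=> hs h w hw hB; apply: subseq_trans (h w hw hB) hs. Qed.

Lemma universal_catl B p z y :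
  {subset B <= z} -> universal B p y -> universal B p.+1 (z ++ y).
Proof.
move=> hz h [|c w] hw hB; first by rewrite sub0seq.
rewrite -cat1s; apply: cat_subseq.
  by rewrite sub1seq; apply/hz/hB/mem_head.
by apply: h => // d hd; apply: hB; rewrite inE hd orbT.
Qed.

Lemma universal_catr B p z x :
  {subset B <= z} -> universal B p x -> universal B p.+1 (x ++ z).
Proof.
move=> hz h w; case/lastP: w => [|w c] hw hB; first by rewrite sub0seq.
rewrite -cats1; apply: cat_subseq.
  apply: h; first by move: hw; rewrite size_rcons.
  by move=> d hd; apply: hB; rewrite mem_rcons inE hd orbT.
by rewrite sub1seq; apply/hz/hB; rewrite mem_rcons mem_head.
Qed.

Lemma subseq_cat_universal_prefix B p x z w :
  universal B p x -> {subset w <= B} -> subseq w (x ++ z) ->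
  exists w1 w2, [/\ w = w1 ++ w2, subseq w1 x, subseq w2 z
                  & (p <= size w1) || (w2 == [::])].
Proof.
move=> hu hB /subseq_cat_split [v1 [v2 [e h1 h2]]].
have [hp|hp] := leqP p (size v1); first by exists v1, v2; rewrite hp.
have [hw|hw] := leqP (size w) p.
  by exists w, [::]; rewrite cats0 sub0seq eqxx orbT (hu w hw hB).
exists (take p w), (drop p w); split.
- by rewrite cat_take_drop.
- by apply: hu; [rewrite size_takel // ltnW | move=> d /mem_take/hB].
- rewrite e drop_cat ltnNge (ltnW hp) /=.
  exact: subseq_trans (drop_subseq _ _) h2.
- by rewrite size_takel ?leqnn // ltnW.
Qed.

Lemma subseq_cat_universal_suffix B q z y w :
  universal B q y -> {subset w <= B} -> subseq w (z ++ y) ->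
  exists w1 w2, [/\ w = w1 ++ w2, subseq w1 z, subseq w2 y
                  & (q <= size w2) || (w1 == [::])].
Proof.
move=> hu hB /subseq_cat_split [v1 [v2 [e h1 h2]]].
have [hq|hq] := leqP q (size v2); first by exists v1, v2; rewrite hq.
have [hw|hw] := leqP (size w) q.
  by exists [::], w; rewrite sub0seq eqxx orbT (hu w hw hB).
have hs : size w = size v1 + size v2 by rewrite e size_cat.
exists (take (size w - q) w), (drop (size w - q) w); split.
- by rewrite cat_take_drop.
- have hi : size w - q < size v1 by lia.
  by rewrite {2}e take_cat hi; apply: subseq_trans (take_subseq _ _) h1.
- by apply: hu; [rewrite size_drop; lia | move=> d /mem_drop/hB].
- by rewrite size_drop; apply/orP; left; lia.
Qed.

(* A subword of [x ++ s ++ y] putting fewer than [p] letters in [x] embeds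
   entirely into the universal [x] (symmetrically for [y]); otherwise at most
   [n - p - q <= r] of its letters fall into [s]. *)
Lemma simn_between_universal B p q r n x s s' y :
  universal B p x -> universal B q y -> {subset x ++ s ++ y <= B} ->
  subseq s' s -> simn r s' s -> n <= p + q + r ->
  simn n (x ++ s' ++ y) (x ++ s ++ y).
Proof.
move=> hx hy hB hs' hr hn w hw.
apply/idP/idP => h.
  by apply: subseq_trans h _; rewrite !cat_subseq ?subseq_refl.
have hwB : {subset w <= B} by move=> d /(mem_subseq h)/hB.
have [w1 [w2 [ew h1 h2 /orP [c1|/eqP w20]]]] := subseq_cat_universal_prefix hx hwB h;
  last by rewrite ew w20 cats0 (subseq_trans h1) ?prefix_subseq.
have hw2B : {subset w2 <= B} by move=> d hd; apply: hwB; rewrite ew mem_cat hd orbT.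
have [v1 [v2 [ew2 g1 g2 /orP [c2|/eqP v10]]]] := subseq_cat_universal_suffix hy hw2B h2;
  last by rewrite ew ew2 v10; apply: cat_subseq;
    rewrite // (subseq_trans g2) ?suffix_subseq.
rewrite ew ew2; apply: cat_subseq => //; apply: cat_subseq => //.
rewrite (hr v1) //.
by move: hw; rewrite ew ew2 !size_cat; lia.
Qed.

Lemma arch_decomposition B u : B != set0 -> {subset B <= u} ->
  exists s a u', [/\ u = s ++ a :: u', a \in B, a \notin s
                   & {subset B <= s ++ [:: a]}].
Proof.
elim: u B => [|c u IH] B hB hs; first by case/set0Pn: hB => b /hs.
have [/eqP hBc|hBc] := boolP (B :\ c == set0).
  have Bc b : b \in B -> b = c.
    move=> hb; apply/eqP; apply: contraT => hbc.
    by move/setP: hBc => /(_ b); rewrite !inE hbc hb.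
  exists [::], c, u; split => //; last by move=> b /Bc ->; rewrite mem_head.
  by case/set0Pn: hB => b hb; rewrite -(Bc b hb).
have hsu : {subset B :\ c <= u}.
  by move=> b /setD1P [hbc /hs]; rewrite inE (negbTE hbc).
have [s [a [u' [-> /setD1P [hac ha] hna hsub]]]] := IH _ hBc hsu.
exists (c :: s), a, u'; split => //; first by rewrite inE negb_or hac.
move=> b hb; have [->|hbc] := eqVneq b c; first exact: mem_head.
by rewrite inE hsub ?orbT //; apply/setD1P.
Qed.

Definition rigid n x u :=
  forall al b be, u = al ++ b :: be -> ~ simn n (x ++ al ++ be) (x ++ u).

Lemma rigid0 u : rigid 0 [::] u -> u = [::].
Proof. by case: u => [|b u] // /(_ [::] b u erefl) /(_ (@simn0 _ _)). Qed.

Lemma rigid_catr n x s u : rigid n x (s ++ u) -> rigid n (x ++ s) u.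
Proof.
move=> h al b be e hsim; apply: (h (s ++ al) b be); first by rewrite e catA.
by move: hsim; rewrite e -!catA.
Qed.

Lemma rigid_universal_frame B p q r n x s y :
  universal B p x -> universal B q y -> {subset x ++ s ++ y <= B} ->
  n <= p + q + r -> rigid n x (s ++ y) -> rigid r [::] s.
Proof.
move=> hx hy hB hn hrig al b be es hsim.
apply: (hrig al b (be ++ y)); first by rewrite es -catA.
have := simn_between_universal hx hy hB _ hsim hn.
by rewrite es -!catA /=; apply; rewrite cat_subseq ?subseq_cons.
Qed.

(* [f_k] with the base value [f_0 = 0], the length bound for the empty
   alphabet; it agrees with [fk] for [k >= 1]. *)
Fixpoint fk_ext k n : nat :=
  if k is k'.+1 then \max_(m < n.+1) (m * fk_ext k' (n.+1 - m) + m + fk_ext k' (n - m))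
  else 0.

Section RigidBound.
Variables (B : {set A}) (k : nat).
Hypothesis hB : #|B| = k.+1.
Hypothesis IH : forall (B' : {set A}) s r,
  #|B'| = k -> {subset s <= B'} -> rigid r [::] s -> size s <= fk_ext k r.

Lemma size_rigid_avoid c r s : c \in B -> c \notin s -> {subset s <= B} ->
  rigid r [::] s -> size s <= fk_ext k r.
Proof.
move=> hc hcs hsB; apply: (IH (B' := B :\ c)).
  by move: hB; rewrite (cardsD1 c) hc; case.
by move=> d hd; rewrite in_setD1 hsB // andbT; apply: contraNneq hcs => <-.
Qed.

Lemma rigid_arch_bound u p x n :
  {subset u <= B} -> {subset x <= B} -> universal B p x -> p <= n -> rigid n x u ->
  exists j, [/\ universal B j u, p + j <= n &
    size u <= j * fk_ext k (n.+1 - (p + j)) + j + fk_ext k (n - (p + j))].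
Proof.
have [N hN] := ubnP (size u); elim: N u hN p x => // N IHN u hN p x.
move=> huB hxB hx hpn hrig.
have hxuB : {subset x ++ u <= B}.
  by move=> d; rewrite mem_cat => /orP [/hxB|/huB].
have rigid_u r : n <= p + r -> rigid r [::] u.
  move=> hr; apply: (rigid_universal_frame (n := n) hx (@universal0 B [::]));
    by rewrite ?cats0 ?addn0.
have [/subsetP hall|/subsetPn [c hc hcu]] := boolP (B \subset u); last first.
  exists 0; split; [exact: universal0 | by rewrite addn0 |].
  rewrite mul0n !add0n addn0.
  by apply: (size_rigid_avoid hc hcu huB); apply: rigid_u; lia.
have hB0 : B != set0 by rewrite -card_gt0 hB.
have [s [a [u' [e ha hna hsub]]]] := arch_decomposition hB0 hall.
have hsB : {subset s <= B} by move=> d hd; apply: huB; rewrite e mem_cat hd.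
have hu'B : {subset u' <= B} by move=> d hd; apply: huB; rewrite e mem_cat inE hd !orbT.
have hpn' : p < n.
  rewrite ltnNge; apply/negP => hnp.
  have /rigid0 : rigid 0 [::] u by apply: rigid_u; lia.
  by rewrite e; case: (s).
have hu'N : size u' < N by move: hN; rewrite e size_cat /=; lia.
have hx'B : {subset x ++ s ++ [:: a] <= B}.
  by move=> d; rewrite !mem_cat inE => /or3P [/hxB|/hsB|/eqP ->].
have hrig' : rigid n (x ++ s ++ [:: a]) u'.
  by apply: rigid_catr; rewrite -catA /= -e.
have [j [hj hpj hsize]] :=
  IHN u' hu'N p.+1 _ hu'B hx'B (universal_catr hsub hx) hpn' hrig'.
have hs : size s <= fk_ext k (n.+1 - (p + j.+1)).
  apply: (size_rigid_avoid ha hna hsB).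
  apply: (rigid_universal_frame (n := n) hx (universal_subseq (subseq_cons _ a) hj));
    rewrite -?e //; lia.
exists j.+1; split.
- by rewrite e -cat1s catA; apply: universal_catl.
- lia.
- rewrite e size_cat /=; move: hsize; rewrite addSnnS mulSn; lia.
Qed.
End RigidBound.

Lemma size_rigid k B u n :
  #|B| = k -> {subset u <= B} -> rigid n [::] u -> size u <= fk_ext k n.
Proof.
elim: k B u n => [|k IHk] B u n hB huB hr.
  by case: u huB {hr} => [|c u] // /(_ c (mem_head _ _)); rewrite (cards0_eq hB) inE.
have hnil : {subset [::] <= B} by [].
have [j [_ hj hs]] := rigid_arch_bound hB IHk huB hnil (@universal0 B [::]) (leq0n n) hr.
apply: leq_trans hs _; rewrite add0n.
exact: (@leq_bigmax _ (fun m : 'I_n.+1 => _) (Ordinal (hj : j < n.+1))).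
Qed.

Lemma fk_ext1 n : fk_ext 1 n = n.
Proof.
apply/eqP; rewrite eqn_leq; apply/andP; split.
  by apply/bigmax_leqP => i _; rewrite /= muln0 !addn0 add0n -ltnS.
have := @leq_bigmax _ (fun m : 'I_n.+1 => m * fk_ext 0 (n.+1 - m) + m + fk_ext 0 (n - m)) ord_max.
by rewrite /= muln0 !addn0 add0n.
Qed.

Lemma fk_extE k n : 0 < k -> fk_ext k n = fk k n.
Proof.
elim: k n => [|[|k] IHk] n // _; first exact: fk_ext1.
rewrite -[LHS]/(\max_(m < n.+1) (m * fk_ext k.+1 (n.+1 - m) + m + fk_ext k.+1 (n - m))).
by apply: eq_bigr => i _; rewrite !IHk.
Qed.

Lemma leq_fk_ext k n : 0 < k -> n <= fk_ext k n.
Proof.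
case: k => [|k] // _; apply: leq_trans (leq_bigmax ord_max); rewrite /=; lia.
Qed.

Section Languages.
Variable L : lang A.

Lemma ssubword_size u v : ssubword u v -> size u < size v.
Proof. by case=> h hne; rewrite (ltn_leqif (size_subseq_leqif h)); apply/eqP. Qed.

Lemma minl_rigid n u : nPT n L -> minl L u -> rigid n [::] u.
Proof.
move=> hL [hu hmin] al b be e hs.
apply: (hmin (al ++ be)); first exact/(hL _ _ hs).
split; first by rewrite e cat_subseq ?subseq_refl ?subseq_cons.
by move/(congr1 size); rewrite e !size_cat /=; lia.
Qed.

Lemma exists_minl u : L u -> exists2 u0, minl L u0 & subseq u0 u.
Proof.
have [N hN] := ubnP (size u); elim: N u hN => // N IHN u hN hu.
have [[v hv hvu]|hmin] := classic (exists2 v, L v & ssubword v u).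
  have [|u0 hu0 hu0v] := IHN v _ hv; first exact: leq_trans (ssubword_size hvu) hN.
  by exists u0 => //; apply: subseq_trans hu0v hvu.1.
by exists u; [split=> // v hv hvu; apply: hmin; exists v | apply: subseq_refl].
Qed.

Lemma nPT_simn_closed n (P : lang A) :
  (forall u v, simn n u v -> P u -> P v) -> nPT n P.
Proof. by move=> h u v huv; split; apply: h => //; apply: simn_sym. Qed.

Variable m : nat.
Hypothesis size_minl : forall u, minl L u -> size u <= m.

Lemma upw_simn u v : simn m u v -> upw L u -> upw L v.
Proof.
move=> h [u1 hu1 hs1]; have [u0 hm hs0] := exists_minl hu1.
exists u0; first exact: hm.1.
by rewrite -(h u0 (size_minl hm)); apply: subseq_trans hs0 hs1.
Qed.

(* Above a minimal word [u0] strictly below [u] there is a subword of [u] of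
   length [size u0 + 1 <= m + 1] that still lies strictly above [u0]. *)
Lemma supw_simn u v : simn m.+1 u v -> supw L u -> supw L v.
Proof.
move=> h [u1 hu1 hs1]; have [u0 hm hs0] := exists_minl hu1.
have hsz : size u0 < size u := leq_ltn_trans (size_subseq hs0) (ssubword_size hs1).
have [w [hu0w hwu hw]] := subseq_insert (subseq_trans hs0 hs1.1) hsz.
have hwv : subseq w v by rewrite -(h w) // hw ltnS size_minl.
exists u0; first exact: hm.1.
split; first exact: subseq_trans hu0w hwv.
by move=> e; have := size_subseq hwv; rewrite -e hw ltnn.
Qed.

Lemma minl_simn n : nPT n L -> n <= m.+1 ->
  forall u v, simn m.+1 u v -> minl L u -> minl L v.
Proof.
move=> hL hn u v h [hu hmin]; split; first exact/(hL u v (simn_leq hn h)).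
move=> v' hv' hs.
have [u0 hu0 hu0u] := supw_simn (simn_sym h) (ex_intro2 _ _ v' hv' hs).
exact: hmin u0 hu0 hu0u.
Qed.
End Languages.
End Words.

Theorem theorem11 (A : finType) (k n : nat) (L : lang A) :
  #|A| = k -> 0 < k -> nPT n L ->
  nPT (fk k n) (upw L) /\ nPT (fk k n).+1 (supw L) /\ nPT (fk k n).+1 (minl L).
Proof.
move=> hk k0 hL; rewrite -(fk_extE _ k0).
have size_minl u : minl L u -> size u <= fk_ext k n.
  move=> hu; apply: (@size_rigid _ k [set: A]); first by rewrite cardsT.
    by move=> c; rewrite inE.
  exact: minl_rigid hL hu.
have hn : n <= (fk_ext k n).+1 by apply/leqW/leq_fk_ext.
split; [|split]; apply: nPT_simn_closed.
- exact: upw_simn size_minl.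
- exact: supw_simn size_minl.
- exact: (minl_simn size_minl hL hn).
Qed.
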